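(* Let $K=[k_1,\dots,k_m]\subseteq\{1,\dots,n\}$ be an interval of $m$ consecutive integers $k_1<\dots<k_m$, and let $\delta_K=\prod_{1\le i<j\le m}\big(1-\frac{x_{k_i}}{x_{k_j}}\big)\prod_{1\le r<s\le m}\big(1-\frac{1}{x_{k_r}x_{k_s}}\big)$. Then for every $\alpha\in\mathbb Z^m$, $$\mathrm H_G\big(\delta_K\,x_{k_1}^{\alpha_1}\cdots x_{k_m}^{\alpha_m}\big)=u^G_\alpha .$$
   Context: $G\in\{Sp_{2n},SO_{2n},SO_{2n+1}\}$; $h^G_k$ ($k\in\mathbb Z$) are elements of the ring $\Lambda$ of symmetric functions with $h^G_k=s^G_{(k)}$ (Koike–Terada universal character) for $k\ge0$ and $h^G_k=0$ for $k<0$. $\mathrm H_G$ is the $\mathbb Z$-linear map from the Laurent polynomial ring $\mathbb Z[x_1^{\pm1},\dots,x_n^{\pm1}]$ to $\Lambda$ sending $x^\beta=x_1^{\beta_1}\cdots x_n^{\beta_n}$ to $h^G_{\beta_1}h^G_{\beta_2}\cdots h^G_{\beta_n}$ (it is not a ring homomorphism). For $\alpha\in\mathbb Z^m$, $u^G_\alpha$ is the $m\times m$ determinant whose $(i,1)$ entry is $h^G_{\alpha_i-i+1}$ and whose $(i,j)$ entry for $2\le j\le m$ is $h^G_{\alpha_i-i+j}+h^G_{\alpha_i-i-j+2}$. *)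

From HB Require Import structures.
From mathcomp Require Import all_boot all_order all_algebra.
From mathcomp Require Import finmap.
From mathcomp.multinomials Require Import monalg freeg.

Set Implicit Arguments.
Unset Strict Implicit.
Unset Printing Implicit Defensive.

Import GRing.Theory.
Local Open Scope ring_scope.

(* The ring of symmetric functions, in Macdonald's presentation         *)
(*   Lambda = Z[h_1, h_2, ...]  (h_r algebraically independent),        *)
(* realised as the integral monoid algebra of commutative monomials in  *)
(* countably many indeterminates y_0, y_1, ...; y_r stands for h_{r+1}. *)
Definition Lam : Type := {malg int[{cmonom nat}]}.

Definition hsym (k : int) : Lam :=
  match k with
  | Posz 0 => 1
  | Posz k'.+1 => mkmalgU (ucm k') 1
  | Negz _ => 0
  end.

Inductive grp := Sp | SOeven | SOodd.
(* Sp   : Sp_{2n},  SOeven : SO_{2n},  SOodd : SO_{2n+1} *)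

(* Koike--Terada universal characters of one-row shapes (k), k >= 0:
   sp_(k) = h_k   (from sp_lambda = det(h_{l_i-i+j} + h_{l_i-i-j+2}) with
                   first column h_{l_i-i+1}),
   o_(k)  = h_k - h_{k-2}  (from o_lambda = det(h_{l_i-i+j} - h_{l_i-i-j})). *)
Definition sG1 (G : grp) (k : nat) : Lam :=
  match G with
  | Sp => hsym k%:Z
  | SOeven | SOodd => hsym k%:Z - hsym (k%:Z - 2)
  end.

Definition hG (G : grp) (k : int) : Lam :=
  match k with
  | Posz k' => sG1 G k'
  | Negz _ => 0
  end.

(* Laurent polynomials Z[x_1^{+-1},...,x_n^{+-1}]: the free Z-module on  *)
(* the exponent vectors beta in Z^n (monomial x^beta), with the         *)
(* multiplication x^beta * x^gamma = x^(beta+gamma) extended bilinearly. *)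
Notation expo n := {ffun 'I_n -> int}.
Definition LP (n : nat) := {freeg (expo n) / int}.

Definition LPmono n (beta : expo n) : LP n := Freeg [:: ((1 : int), beta)].
Definition LPone n : LP n := LPmono ([ffun=> 0%R] : expo n).
Definition LPmul n (p q : LP n) : LP n :=
  \sum_(b <- dom p) \sum_(c <- dom q)
     Freeg [:: ((coeff b p * coeff c q : int), (b + c : expo n))].

Definition xpow n (j : 'I_n) (e : int) : LP n :=
  LPmono [ffun l => if l == j then e else 0].

Definition HG (G : grp) n (p : LP n) : Lam :=
  fglift (fun beta : expo n => \prod_(l < n) hG G (beta l)) p.

Definition deltaK n m (k : 'I_m -> 'I_n) : LP n :=
  LPmul
   (\big[@LPmul n/LPone n]_(i < m) \big[@LPmul n/LPone n]_(j < m | (i < j)%N)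
       (LPone n - LPmul (xpow (k i) 1) (xpow (k j) (-1))))
   (\big[@LPmul n/LPone n]_(r < m) \big[@LPmul n/LPone n]_(s < m | (r < s)%N)
       (LPone n - LPmul (xpow (k r) (-1)) (xpow (k s) (-1)))).

Definition xK n m (k : 'I_m -> 'I_n) (alpha : 'I_m -> int) : LP n :=
  \big[@LPmul n/LPone n]_(i < m) xpow (k i) (alpha i).

Definition uG (G : grp) m (alpha : 'I_m -> int) : Lam :=
  \det (\matrix_(i' < m, j' < m)
     let i : int := (i'.+1)%:Z in
     let j : int := (j'.+1)%:Z in
     if j' == 0%N :> nat then hG G (alpha i' - i + 1)
     else hG G (alpha i' - i + j) + hG G (alpha i' - i - j + 2)).

From HB Require Import structures.
From mathcomp Require Import all_boot all_order all_algebra.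
From mathcomp.multinomials Require Import monalg freeg.
From mathcomp Require Import ring.
Local Open Scope ring_scope.
Import GRing.Theory.
Set Implicit Arguments.
Unset Strict Implicit.
Unset Printing Implicit Defensive.

(* Put y_i = x_i + x_i^-1. Since x^j + x^-j is a monic polynomial of degree j
   in x + x^-1 (a Dickson polynomial), column j of the Laurent version of
   u_alpha is x_i^(alpha_i - i) times a monic polynomial of degree j - 1 in
   y_i. Hence its determinant is x^(alpha - rho) times the Vandermonde
   determinant of the y_i, and y_j - y_i = x_j (1 - x_i/x_j)(1 - 1/(x_i x_j))
   turns this into delta_K x^alpha. Each entry of row i only involves the
   variable x_(k_i), and these variables are distinct, so H_G is multiplicative
   on every term of the Leibniz expansion and maps the Laurent determinant to
   u^G_alpha. *)

Section Dickson.
Variable R : comNzRingType.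

Fixpoint dickson (j : nat) : {poly R} :=
  match j with
  | 0 => 2%:P
  | 1 => 'X
  | (j'.+1 as j1).+1 => 'X * dickson j1 - dickson j'
  end.

Lemma dicksonSS j : dickson j.+2 = 'X * dickson j.+1 - dickson j.
Proof. by []. Qed.

Lemma horner_dickson (x x' : R) j :
  x * x' = 1 -> (dickson j).[x + x'] = x ^+ j + x' ^+ j.
Proof.
move=> xx'; elim/ltn_ind: j => -[|[|j]] IH.
- by rewrite hornerC.
- by rewrite hornerX.
rewrite dicksonSS hornerD hornerN hornerM hornerX !IH //.
have -> : x ^+ j + x' ^+ j = (x ^+ j + x' ^+ j) * (x * x') by rewrite xx' mulr1.
rewrite !exprS; ring.
Qed.

Lemma dickson_monic j : dickson j.+1 \is monic /\ size (dickson j.+1) = j.+2.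
Proof.
elim/ltn_ind: j => -[|j] IH; first by rewrite monicX size_polyX.
have [mon1 size1] := IH j (ltnSn j).
have size_low : (size (dickson j) <= j.+1)%N.
  by case: j IH {mon1 size1} => [|j] IH; rewrite ?size_polyC_leq1 ?(IH j _).2.
have size_top : size ('X * dickson j.+1)%R = j.+3.
  by rewrite mulrC size_mulX ?monic_neq0 // size1.
have size_lt : (size (- dickson j)%R < size ('X * dickson j.+1)%R)%N.
  by rewrite size_polyN size_top ltnS (leq_trans size_low).
rewrite dicksonSS; split.
- by rewrite monicE lead_coefDl // lead_coef_monicM ?monicX // -monicE.
- by rewrite size_polyDl.
Qed.

Definition mdickson j := if j is 0 then 1 else dickson j.

Lemma mdickson_monic j : mdickson j \is monic.
Proof. by case: j => [|j]; [exact: monic1 | exact: (dickson_monic j).1]. Qed.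

Lemma size_mdickson j : size (mdickson j) = j.+1.
Proof. by case: j => [|j]; [exact: size_poly1 | exact: (dickson_monic j).2]. Qed.

End Dickson.

Lemma det_monic_Vandermonde (R : comNzRingType) m (P : nat -> {poly R}) (z : 'I_m -> R) :
  (forall j, P j \is monic) -> (forall j, size (P j) = j.+1) ->
  \det (\matrix_(i < m, j < m) (P j).[z i]) =
  \prod_(i < m) \prod_(j < m | (i < j)%N) (z j - z i).
Proof.
move=> Pmonic Psize.
have -> : \matrix_(i < m, j < m) (P j).[z i] =
    (Vandermonde m (\row_i z i))^T *m \matrix_(l < m, j < m) (P j)`_l.
  apply/matrixP => i j; rewrite !mxE (horner_coef_wide _ (leq_trans _ (ltn_ord j))) ?Psize //.
  by apply: eq_bigr => l _; rewrite !mxE mulrC.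
rewrite det_mulmx det_tr det_Vandermonde -det_tr det_trig; last first.
  by apply/is_trig_mxP => i j ij; rewrite !mxE nth_default ?Psize.
rewrite [X in _ * X]big1 ?mulr1 => [|j _]; last first.
  by rewrite !mxE -(monicP (Pmonic j)) lead_coefE Psize.
by apply: eq_bigr => i _; apply: eq_bigr => j _; rewrite !mxE.
Qed.

Lemma subr_add_inv_factor (R : comNzRingType) (a a' b b' : R) :
  a * a' = 1 -> b * b' = 1 ->
  (b + b') - (a + a') = b * (1 - a * b') * (1 - a' * b').
Proof.
move=> aa' bb'; apply/eqP; rewrite eq_sym -subr_eq0.
have -> : b * (1 - a * b') * (1 - a' * b') - ((b + b') - (a + a')) =
    (b * b' - 1) * (b' - (a + a')) + (a * a' - 1) * (b * b') * b' by ring.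
by rewrite aa' bb' subrr !mul0r addr0.
Qed.

Lemma prod_lt_pairs (R : comNzRingType) m (F : 'I_m -> R) :
  \prod_(i < m) \prod_(j < m | (i < j)%N) F j = \prod_(j < m) F j ^+ j.
Proof.
rewrite (exchange_big_dep xpredT) //=; apply: eq_bigr => j _.
rewrite -(big_ord_widen m (fun=> F j)) ?(ltnW (ltn_ord j)) //.
by rewrite prodr_const card_ord.
Qed.

(* [uG G alpha] is [\det (u_mx (fun=> hG G) alpha)]. *)
Definition u_mx {R : zmodType} {m} (f : 'I_m -> int -> R) (alpha : 'I_m -> int) : 'M[R]_m :=
  \matrix_(i' < m, j' < m)
     let i : int := (i'.+1)%:Z in
     let j : int := (j'.+1)%:Z in
     if j' == 0%N :> nat then f i' (alpha i' - i + 1)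
     else f i' (alpha i' - i + j) + f i' (alpha i' - i - j + 2).

Lemma u_mxE_sum (R : zmodType) m (f : 'I_m -> int -> R) (alpha : 'I_m -> int) i j :
  u_mx f alpha i j = \sum_(t : bool | t || (j != 0%N :> nat))
    f i (if t then alpha i - (i.+1)%:Z + (j.+1)%:Z else alpha i - (i.+1)%:Z - (j.+1)%:Z + 2).
Proof.
rewrite big_mkcond big_bool mxE /=.
by case: (j =P 0%N :> nat) => [-> |]; rewrite /= ?addr0.
Qed.

Section LaurentDet.
Variables (R : comNzRingType) (m : nat) (pw : 'I_m -> int -> R).
Hypothesis pwD : forall i a b, pw i (a + b) = pw i a * pw i b.
Hypothesis pw0 : forall i, pw i 0 = 1.

Lemma pw_nat i (e : nat) : pw i e%:Z = pw i 1 ^+ e.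
Proof. by elim: e => [|e IH]; rewrite ?pw0 // intS pwD IH exprS. Qed.

Lemma pw_Nnat i (e : nat) : pw i (- e%:Z) = pw i (-1) ^+ e.
Proof. by elim: e => [|e IH]; rewrite ?oppr0 ?pw0 // intS opprD pwD IH exprS. Qed.

Lemma pw_inv i : pw i 1 * pw i (-1) = 1.
Proof. by rewrite -pwD addrN pw0. Qed.

Let y i := pw i 1 + pw i (-1).

Lemma u_mx_dickson (alpha : 'I_m -> int) : u_mx pw alpha =
  diag_mx (\row_i pw i (alpha i - i%:Z)) *m \matrix_(i, j) (mdickson R j).[y i].
Proof.
apply/matrixP => i j; rewrite mul_diag_mx !mxE.
case: j => -[|j] lt_j_m; rewrite /mdickson.
  by rewrite hornerC mulr1; congr (pw _ _); rewrite intS; ring.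
rewrite horner_dickson ?pw_inv // -pw_nat -pw_Nnat mulrDr -!pwD.
by congr (_ + _); congr (pw _ _); rewrite !intS; ring.
Qed.

Theorem det_u_mx (alpha : 'I_m -> int) :
  (\prod_(i < m) \prod_(j < m | (i < j)%N) (1 - pw i 1 * pw j (-1))) *
  (\prod_(r < m) \prod_(s < m | (r < s)%N) (1 - pw r (-1) * pw s (-1))) *
  \prod_(i < m) pw i (alpha i) = \det (u_mx pw alpha).
Proof.
rewrite u_mx_dickson det_mulmx det_diag.
rewrite det_monic_Vandermonde; [|exact: mdickson_monic|exact: size_mdickson].
have -> : \prod_(i < m) \prod_(j < m | (i < j)%N) (y j - y i) =
    (\prod_(j < m) pw j 1 ^+ j) *
    (\prod_(i < m) \prod_(j < m | (i < j)%N) (1 - pw i 1 * pw j (-1))) *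
    (\prod_(r < m) \prod_(s < m | (r < s)%N) (1 - pw r (-1) * pw s (-1))).
  rewrite -prod_lt_pairs -!big_split /=; apply: eq_bigr => i _.
  by rewrite -!big_split; apply: eq_bigr => j _; rewrite subr_add_inv_factor ?pw_inv.
have -> : \prod_(i < m) pw i (alpha i) =
    \prod_(i < m) (\row_i pw i (alpha i - i%:Z)) 0 i * \prod_(j < m) pw j 1 ^+ j.
  by rewrite -big_split; apply: eq_bigr => i _; rewrite mxE -pw_nat /= -pwD subrK.
ring.
Qed.

End LaurentDet.

HB.instance Definition _ (R : ringType) (K : choiceType) (M : lmodType R) (f : K -> M) :=
  GRing.isAdditive.Build {freeg K / R} M (fglift f) (lift_is_additive f).

Section LaurentRing.
Variable n : nat.
Implicit Types (p q r : LP n) (b c : expo n) (w : expo n -> int).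

(* Pairings with weights w separate Laurent polynomials (lpsum_inj), so the
   ring axioms for LPmul reduce to identities between finite sums. *)
Definition lpsum w p : int := fglift (fun b => w b : int^o) p.

Lemma lpsumE w p : lpsum w p = \sum_(b <- dom p) coeff b p * w b.
Proof.
rewrite /lpsum -{1}(freeg_sumE p) raddf_sum.
by apply: eq_bigr => b _; rewrite /= liftU.
Qed.

Lemma lpsumD w p q : lpsum w (p + q) = lpsum w p + lpsum w q.
Proof. by rewrite /lpsum raddfD. Qed.

Lemma lpsum_mul w p q : lpsum w (LPmul p q) =
  \sum_(b <- dom p) \sum_(c <- dom q) coeff b p * coeff c q * w (b + c).
Proof.
rewrite /lpsum /LPmul raddf_sum; apply: eq_bigr => b _.
by rewrite raddf_sum; apply: eq_bigr => c _; rewrite /= liftU.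
Qed.

Lemma lpsum_mull w p q : lpsum w (LPmul p q) =
  \sum_(b <- dom p) coeff b p * lpsum (fun c => w (b + c)) q.
Proof.
rewrite lpsum_mul; apply: eq_bigr => b _; rewrite lpsumE big_distrr.
by apply: eq_bigr => c _; rewrite /= mulrA.
Qed.

Lemma lpsum_mulr w p q : lpsum w (LPmul p q) =
  \sum_(c <- dom q) coeff c q * lpsum (fun b => w (b + c)) p.
Proof.
rewrite lpsum_mul exchange_big; apply: eq_bigr => c _; rewrite lpsumE big_distrr.
by apply: eq_bigr => b _; rewrite /= mulrCA mulrA.
Qed.

Lemma lpsum_inj p q : (forall w, lpsum w p = lpsum w q) -> p = q.
Proof.
by move=> eq_pq; apply/eqP/freeg_eqP => b; have := eq_pq (fun c => (c == b)%:R).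
Qed.

Lemma lpsum_mono w b : lpsum w (LPmono b) = w b.
Proof. by rewrite /lpsum liftU scale1r. Qed.

Lemma lpsum_mulmono w b p : lpsum w (LPmul (LPmono b) p) = lpsum (fun c => w (b + c)) p.
Proof. by rewrite lpsum_mull /LPmono domU // big_seq1 coeffU eqxx !mul1r. Qed.

Lemma LPmulA : associative (@LPmul n).
Proof.
move=> p q r; apply: lpsum_inj => w; rewrite lpsum_mull lpsum_mulr.
under eq_bigr do rewrite lpsum_mulr big_distrr.
under [RHS]eq_bigr do rewrite lpsum_mull big_distrr.
rewrite exchange_big; apply: eq_bigr => b _; apply: eq_bigr => c _.
rewrite /= !mulrA [coeff _ r * _]mulrC !lpsumE; congr (_ * _).
by apply: eq_bigr => d _; rewrite addrA addrAC.
Qed.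

Lemma LPmulC : commutative (@LPmul n).
Proof.
move=> p q; apply: lpsum_inj => w; rewrite !lpsum_mul exchange_big.
by apply: eq_bigr => b _; apply: eq_bigr => c _; rewrite [coeff b q * _]mulrC addrC.
Qed.

Lemma LPmul1 : left_id (LPone n) (@LPmul n).
Proof.
move=> p; apply: lpsum_inj => w; rewrite lpsum_mulmono.
by rewrite !lpsumE; apply: eq_bigr => b _; rewrite add0r.
Qed.

Lemma LPmulDl : left_distributive (@LPmul n) +%R.
Proof.
move=> p q r; apply: lpsum_inj => w; rewrite lpsumD !lpsum_mulr -big_split /=.
by apply: eq_bigr => c _; rewrite lpsumD mulrDr.
Qed.

Lemma LPone_neq0 : LPone n != 0.
Proof. by rewrite /LPone /LPmono freegU_eq0. Qed.

End LaurentRing.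

HB.instance Definition _ n := GRing.Zmodule.on (LP n).
HB.instance Definition _ n := GRing.Zmodule_isComNzRing.Build (LP n)
  (@LPmulA n) (@LPmulC n) (@LPmul1 n) (@LPmulDl n) (@LPone_neq0 n).

Section Monomials.
Variable n : nat.
Implicit Types (b c : expo n).

Lemma LPmonoD b c : LPmono (b + c) = LPmono b * LPmono c.
Proof.
by apply: lpsum_inj => w; rewrite [RHS]lpsum_mulmono !lpsum_mono.
Qed.

Lemma LPmono0 : LPmono (0 : expo n) = 1.
Proof. by congr LPmono; apply/ffunP => l; rewrite !ffunE. Qed.

Lemma xpowD (j : 'I_n) (e e' : int) : xpow j (e + e') = xpow j e * xpow j e'.
Proof.
rewrite /xpow -LPmonoD; congr LPmono; apply/ffunP => l; rewrite !ffunE.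
by case: (l == j); rewrite ?addr0.
Qed.

Lemma xpow0 (j : 'I_n) : xpow j 0 = 1.
Proof. by rewrite /xpow -LPmono0; congr LPmono; apply/ffunP => l; rewrite !ffunE if_same. Qed.

Lemma prod_xpow m (k : 'I_m -> 'I_n) (e : 'I_m -> int) :
  \prod_(i < m) xpow (k i) (e i) =
  LPmono (\sum_(i < m) [ffun l => if l == k i then e i else 0]).
Proof. by rewrite (big_morph _ LPmonoD LPmono0). Qed.

End Monomials.

HB.instance Definition _ G n :=
  GRing.isAdditive.Build (LP n) Lam (@HG G n) (lift_is_additive _).

Section HGTransfer.
Variables (G : grp) (n m : nat) (k : 'I_m -> 'I_n).
Hypothesis k_inj : injective k.

Lemma HG_mono (b : expo n) : HG G (LPmono b) = \prod_(l < n) hG G (b l).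
Proof. by rewrite /HG liftU scale1r. Qed.

Lemma hG0 : hG G 0 = 1.
Proof. by case: G => //=; rewrite subr0. Qed.

Lemma HG_prod_xpow (e : 'I_m -> int) :
  HG G (\prod_(i < m) xpow (k i) (e i)) = \prod_(i < m) hG G (e i).
Proof.
rewrite prod_xpow HG_mono (bigID (mem (k @: 'I_m))) /=.
rewrite [X in _ * X]big1 ?mulr1 => [|l l_notin]; last first.
  rewrite sum_ffunE big1 ?hG0 // => i _; rewrite ffunE.
  by case: eqP => // l_ki; rewrite l_ki imset_f in l_notin.
rewrite big_imset /=; last by move=> i j _ _ /k_inj.
apply: eq_bigr => i _; rewrite sum_ffunE (bigD1 i) //= ffunE eqxx big1 ?addr0 //.
by move=> j j_i; rewrite ffunE (inj_eq k_inj) eq_sym (negbTE j_i).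
Qed.

Lemma HG_prod_sum_xpow (J : finType) (P : 'I_m -> pred J) (e : 'I_m -> J -> int) :
  HG G (\prod_(i < m) \sum_(t | P i t) xpow (k i) (e i t)) =
  \prod_(i < m) \sum_(t | P i t) hG G (e i t).
Proof.
rewrite !bigA_distr_big_dep raddf_sum.
by apply: eq_bigr => f _; exact: HG_prod_xpow.
Qed.

Lemma HG_signM (b : bool) (p : LP n) : HG G ((-1) ^+ b * p) = (-1) ^+ b * HG G p.
Proof. by case: b; rewrite ?expr0 ?expr1 ?mul1r ?mulN1r ?raddfN. Qed.

Lemma HG_det_u_mx (alpha : 'I_m -> int) :
  HG G (\det (u_mx (fun i => xpow (k i)) alpha)) = \det (u_mx (fun=> hG G) alpha).
Proof.
rewrite /determinant raddf_sum; apply: eq_bigr => s _.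
rewrite [LHS]/= HG_signM; congr (_ * _).
under eq_bigr do rewrite u_mxE_sum.
under [RHS]eq_bigr do rewrite u_mxE_sum.
exact: HG_prod_sum_xpow.
Qed.

End HGTransfer.

Theorem mainTheorem8 (G : grp) (n m : nat) (a : nat) (k : 'I_m -> 'I_n)
  (hk : forall i : 'I_m, nat_of_ord (k i) = (a + i)%N)
  (alpha : 'I_m -> int) :
  HG G (LPmul (deltaK k) (xK k alpha)) = uG G alpha.
Proof.
(* The interval hypothesis is only needed for the injectivity of k;
   deltaK k * xK k alpha is convertible to the left side of det_u_mx. *)
have k_inj : injective k.
  by move=> i j /(congr1 (@nat_of_ord _)); rewrite !hk => /addnI /val_inj.
rewrite /uG -(HG_det_u_mx G k_inj alpha) -det_u_mx //.
- by move=> i; apply: xpowD.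
- by move=> i; apply: xpow0.
Qed.
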